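(* Let $\mathbf{u}=(u_1,u_2),\mathbf{v}=(v_1,v_2)\in\mathbb{R}^2$ be fixed linearly independent unit vectors, and let $D_1\subset\mathbb{R}^2$ be an open disc centered at the origin. Let $\mathbf{f}=(f_1,f_2)$ be a vector field on $\mathbb{R}^2$ with $f_1,f_2\in C^2_c(D_1)$. Then $$\operatorname{curl}\mathbf{f}=\frac{1}{\det(\mathbf{v},\mathbf{u})}\,D_{\mathbf{u}}D_{\mathbf{v}}\,\mathcal{L}\mathbf{f},$$ where $\det(\mathbf{v},\mathbf{u})=v_1u_2-u_1v_2$. In particular, the operator $\mathcal{L}$ is injective (invertible) on compactly supported (in $D_1$, with $C^2$ components) divergence-free vector fields.
   Context: For a function $h$ on $\mathbb{R}^2$ and a unit vector $\mathbf{u}$, $\mathcal{X}_{\mathbf{u}}h(\mathbf{x})=\int_0^\infty h(\mathbf{x}+t\mathbf{u})\,dt$ and $D_{\mathbf{u}}h=\mathbf{u}\cdot\nabla h$ is the directional derivative. The longitudinal V-line transform is $\mathcal{L}\mathbf{f}=-\mathcal{X}_{\mathbf{u}}(\mathbf{f}\cdot\mathbf{u})+\mathcal{X}_{\mathbf{v}}(\mathbf{f}\cdot\mathbf{v})$, a function on $\mathbb{R}^2$. In 2D, $\operatorname{curl}\mathbf{f}=\frac{\partial f_2}{\partial x_1}-\frac{\partial f_1}{\partial x_2}$. *)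

From Stdlib Require Import Reals.
From Coquelicot Require Import Coquelicot.
Open Scope R_scope.

Definition ray (x u : R * R) (t : R) : R * R :=
  (fst x + t * fst u, snd x + t * snd u).

Definition Xray (u : R * R) (h : R * R -> R) (x : R * R) : R :=
  RInt_gen (fun t => h (ray x u t)) (at_point 0) (Rbar_locally p_infty).

Definition Ddir (u : R * R) (h : R * R -> R) (x : R * R) : R :=
  Derive (fun t => h (ray x u t)) 0.

Definition d1 (h : R * R -> R) (x : R * R) : R := Derive (fun t => h (t, snd x)) (fst x).
Definition d2 (h : R * R -> R) (x : R * R) : R := Derive (fun t => h (fst x, t)) (snd x).

Definition dot (a b : R * R) : R := fst a * fst b + snd a * snd b.

Definition Lvl (u v : R * R) (f : R * R -> R * R) (x : R * R) : R :=
  - Xray u (fun y => dot (f y) u) x + Xray v (fun y => dot (f y) v) x.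

Definition curl (f : R * R -> R * R) (x : R * R) : R :=
  d1 (fun y => snd (f y)) x - d2 (fun y => fst (f y)) x.

Definition div (f : R * R -> R * R) (x : R * R) : R :=
  d1 (fun y => fst (f y)) x + d2 (fun y => snd (f y)) x.

Definition detvu (v u : R * R) : R := fst v * snd u - fst u * snd v.

Definition unit_vec (u : R * R) : Prop := fst u ^ 2 + snd u ^ 2 = 1.

Definition C2 (h : R * R -> R) : Prop :=
  (forall x, ex_derive (fun t => h (t, snd x)) (fst x)) /\
  (forall x, ex_derive (fun t => h (fst x, t)) (snd x)) /\
  (forall x, ex_derive (fun t => d1 h (t, snd x)) (fst x)) /\
  (forall x, ex_derive (fun t => d1 h (fst x, t)) (snd x)) /\
  (forall x, ex_derive (fun t => d2 h (t, snd x)) (fst x)) /\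
  (forall x, ex_derive (fun t => d2 h (fst x, t)) (snd x)) /\
  (forall x, continuous h x) /\
  (forall x, continuous (d1 h) x) /\
  (forall x, continuous (d2 h) x) /\
  (forall x, continuous (d1 (d1 h)) x) /\
  (forall x, continuous (d2 (d1 h)) x) /\
  (forall x, continuous (d1 (d2 h)) x) /\
  (forall x, continuous (d2 (d2 h)) x).

(* h has compact support contained in the open disc of radius Rad centered
   at the origin: it vanishes outside some closed disc of radius r < Rad. *)
Definition supp_in_disc (Rad : R) (h : R * R -> R) : Prop :=
  exists r, 0 < r < Rad /\
    forall x, r ^ 2 < fst x ^ 2 + snd x ^ 2 -> h x = 0.

Definition C2c_disc (Rad : R) (h : R * R -> R) : Prop :=
  C2 h /\ supp_in_disc Rad h.

Definition field_C2c_disc (Rad : R) (f : R * R -> R * R) : Prop :=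
  C2c_disc Rad (fun y => fst (f y)) /\ C2c_disc Rad (fun y => snd (f y)).

From Stdlib Require Import Reals Lra Psatz FunctionalExtensionality.
From Coquelicot Require Import Coquelicot.
Open Scope R_scope.

(* Along its own direction the ray transform is an antiderivative, D_w X_w h = -h, while
   in any other direction it commutes with differentiation, D_v X_u h = X_u (D_v h): for
   compactly supported h the improper integral is an ordinary integral over a window that
   can be kept fixed. Hence D_u D_v L f = D_v (f.u) - D_u (f.v), which is det(v,u) curl f.
   For injectivity, the difference of two divergence-free fields with the same transform
   is also curl-free, so each of its components a is harmonic with compact support. Then
   s |-> int a a_x (s,t) dt has derivative int (a_x^2 + a_y^2)(s,t) dt >= 0 and vanishes
   outside the support, which forces grad a = 0, hence a = 0. *)

Lemma continuous_comp_pair {U : UniformSpace} (h : R * R -> R) (a b : U -> R) (x : U) :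
  continuous a x -> continuous b x -> continuous h (a x, b x) ->
  continuous (fun y => h (a y, b y)) x.
Proof.
  intros Ha Hb Hh. apply (continuous_comp_2 a b (fun s t => h (s, t))); auto.
  apply (continuous_ext h); [intros [? ?]; reflexivity | exact Hh].
Qed.

Lemma continuous_affine (c d s : R) : continuous (fun t => c + t * d) s.
Proof. apply (ex_derive_continuous (V := R_NormedModule)). auto_derive. auto. Qed.

Lemma continuous_ray_comp (h : R * R -> R) (p w : R * R) (s : R) :
  (forall q, continuous h q) -> continuous (fun t => h (ray p w t)) s.
Proof. intros Hh. apply continuous_comp_pair; auto using continuous_affine. Qed.

Lemma continuous_affine2 (c d e : R) (q : R * R) :
  continuous (fun z : R * R => c + snd z * d + fst z * e) q.
Proof.
  destruct q as [x y].
  apply (continuous_plus (V := R_NormedModule) (fun z : R * R => c + snd z * d));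
    [apply (continuous_plus (V := R_NormedModule)); [apply continuous_const |] |];
    apply (continuous_mult (K := R_AbsRing)); auto using continuous_fst, continuous_snd, continuous_const.
Qed.

Lemma continuity_2d_pt_ray_ray (k : R * R -> R) (p u v : R * R) (z s : R) :
  (forall q, continuous k q) -> continuity_2d_pt (fun z s => k (ray (ray p u s) v z)) z s.
Proof.
  intros Hk. apply continuity_2d_pt_filterlim.
  apply (continuous_comp_pair k (fun q => fst p + snd q * fst u + fst q * fst v)
                                (fun q => snd p + snd q * snd u + fst q * snd v));
    auto using continuous_affine2.
Qed.

Lemma continuous_slice_r (h : R * R -> R) (s t : R) :
  continuous h (s, t) -> continuous (fun z => h (s, z)) t.
Proof. intros Hh. apply continuous_comp_pair; auto using continuous_id, continuous_const. Qed.

Lemma continuity_2d_pt_uncurry (h : R * R -> R) (s t : R) :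
  continuous h (s, t) -> continuity_2d_pt (fun x y => h (x, y)) s t.
Proof.
  intros Hh. apply continuity_2d_pt_filterlim.
  change (continuous (fun z : R * R => h (fst z, snd z)) (s, t)).
  apply (continuous_ext h); [intros [? ?]; reflexivity | exact Hh].
Qed.

Lemma continuous_lincomb {U : UniformSpace} (a b : R) (h k : U -> R) (x : U) :
  continuous h x -> continuous k x -> continuous (fun y => a * h y + b * k y) x.
Proof.
  intros Hh Hk.
  apply (continuous_plus (V := R_NormedModule) (fun y => a * h y) (fun y => b * k y));
    apply (continuous_mult (K := R_AbsRing) (fun _ => _)); auto using continuous_const.
Qed.

Lemma is_derive_lincomb (a b : R) (f g : R -> R) (z lf lg : R) :
  is_derive f z lf -> is_derive g z lg ->
  is_derive (fun t => a * f t + b * g t) z (a * lf + b * lg).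
Proof.
  intros Hf Hg.
  apply (is_derive_plus (fun t => a * f t) (fun t => b * g t));
    apply is_derive_scal; assumption.
Qed.

Lemma ex_derive_lincomb (a b : R) (f g : R -> R) (z : R) :
  ex_derive f z -> ex_derive g z -> ex_derive (fun t => a * f t + b * g t) z.
Proof. intros [lf Hf] [lg Hg]. eexists. apply is_derive_lincomb; eassumption. Qed.

Lemma Derive_lincomb (a b : R) (f g : R -> R) (z : R) :
  ex_derive f z -> ex_derive g z ->
  Derive (fun t => a * f t + b * g t) z = a * Derive f z + b * Derive g z.
Proof. intros Hf Hg. apply is_derive_unique, is_derive_lincomb; apply Derive_correct; assumption. Qed.

Lemma d1_lincomb (a b : R) (h k : R * R -> R) :
  (forall x, ex_derive (fun t => h (t, snd x)) (fst x)) ->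
  (forall x, ex_derive (fun t => k (t, snd x)) (fst x)) ->
  d1 (fun y => a * h y + b * k y) = fun y => a * d1 h y + b * d1 k y.
Proof. intros Hh Hk. apply functional_extensionality; intros y. apply Derive_lincomb; auto. Qed.

Lemma d2_lincomb (a b : R) (h k : R * R -> R) :
  (forall x, ex_derive (fun t => h (fst x, t)) (snd x)) ->
  (forall x, ex_derive (fun t => k (fst x, t)) (snd x)) ->
  d2 (fun y => a * h y + b * k y) = fun y => a * d2 h y + b * d2 k y.
Proof. intros Hh Hk. apply functional_extensionality; intros y. apply Derive_lincomb; auto. Qed.

Lemma d1_opp (h : R * R -> R) (q : R * R) : d1 (fun y => - h y) q = - d1 h q.
Proof. apply Derive_opp. Qed.

Lemma d2_opp (h : R * R -> R) (q : R * R) : d2 (fun y => - h y) q = - d2 h q.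
Proof. apply Derive_opp. Qed.

Lemma C2_lincomb (a b : R) (h k : R * R -> R) : C2 h -> C2 k -> C2 (fun y => a * h y + b * k y).
Proof.
  intros (h1 & h2 & h11 & h12 & h21 & h22 & hc)
         (k1 & k2 & k11 & k12 & k21 & k22 & kc).
  unfold C2.
  rewrite (d1_lincomb a b h k h1 k1), (d2_lincomb a b h k h2 k2),
    (d1_lincomb a b _ _ h11 k11), (d2_lincomb a b _ _ h12 k12),
    (d1_lincomb a b _ _ h21 k21), (d2_lincomb a b _ _ h22 k22).
  repeat split; intros x; first [apply ex_derive_lincomb | apply continuous_lincomb];
    intuition.
Qed.

Definition C1 (h : R * R -> R) : Prop :=
  (forall x, ex_derive (fun t => h (t, snd x)) (fst x)) /\
  (forall x, ex_derive (fun t => h (fst x, t)) (snd x)) /\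
  (forall x, continuous h x) /\
  (forall x, continuous (d1 h) x) /\
  (forall x, continuous (d2 h) x).

Lemma C2_C1 (h : R * R -> R) : C2 h -> C1 h.
Proof. unfold C2, C1. tauto. Qed.

Lemma d1_d2_comm (h : R * R -> R) (q : R * R) : C2 h -> d1 (d2 h) q = d2 (d1 h) q.
Proof.
  intros (h1 & h2 & h11 & h12 & h21 & h22 & _ & _ & _ & _ & c12 & c21 & _).
  destruct q as [x y].
  apply (Schwarz (fun a b => h (a, b)) x y).
  - apply locally_2d_forall. intros s t.
    exact (conj (h1 (s, t)) (conj (h2 (s, t)) (conj (h21 (s, t)) (h12 (s, t))))).
  - apply (continuity_2d_pt_uncurry (d1 (d2 h))), c21.
  - apply (continuity_2d_pt_uncurry (d2 (d1 h))), c12.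
Qed.

Lemma ray_0 (p w : R * R) : ray p w 0 = p.
Proof. destruct p. unfold ray. simpl. f_equal; ring. Qed.

Lemma ray_ray_comm (p u v : R * R) (s t : R) : ray (ray p u s) v t = ray (ray p v t) u s.
Proof. unfold ray. simpl. f_equal; ring. Qed.

Definition Dgrad (w : R * R) (h : R * R -> R) (q : R * R) : R :=
  fst w * d1 h q + snd w * d2 h q.

Lemma is_derive_ray_comp (h : R * R -> R) (p w : R * R) (t0 : R) : C1 h ->
  is_derive (fun t => h (ray p w t)) t0 (Dgrad w h (ray p w t0)).
Proof.
  intros (h1 & h2 & _ & c1 & _).
  unfold Dgrad, ray.
  set (X := fst p + t0 * fst w). set (Y := snd p + t0 * snd w).
  assert (Hdiff : differentiable_pt_lim (fun a b => h (a, b)) X Y (d1 h (X, Y)) (d2 h (X, Y))).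
  { apply filterdiff_differentiable_pt_lim.
    apply (is_derive_filterdiff (fun a b => h (a, b)) X Y (fun a b => d1 h (a, b))).
    - apply filter_forall. intros q. apply Derive_correct, (h1 q).
    - apply Derive_correct, (h2 (X, Y)).
    - apply (continuous_ext (d1 h)); [intros [? ?]; reflexivity | apply c1]. }
  replace (fst w * d1 h (X, Y) + snd w * d2 h (X, Y))
    with (d1 h (X, Y) * fst w + d2 h (X, Y) * snd w) by ring.
  apply is_derive_Reals, (derivable_pt_lim_comp_2d (fun a b => h (a, b))); [exact Hdiff | |];
    apply is_derive_Reals; auto_derive; auto; ring.
Qed.

Definition vanishes_outside (r : R) (h : R * R -> R) : Prop :=
  forall x, r ^ 2 < fst x ^ 2 + snd x ^ 2 -> h x = 0.

Lemma supp_in_disc_vanishes_outside (Rad : R) (h : R * R -> R) :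
  supp_in_disc Rad h -> vanishes_outside Rad h.
Proof. intros (r & Hr & Hh) x Hx. apply Hh. nra. Qed.

Lemma vanishes_outside_lincomb (r a b : R) (h k : R * R -> R) :
  vanishes_outside r h -> vanishes_outside r k -> vanishes_outside r (fun y => a * h y + b * k y).
Proof. intros Hh Hk x Hx. rewrite Hh, Hk by exact Hx. ring. Qed.

Lemma locally_sq_gt (A z : R) : A < z ^ 2 -> locally z (fun t => A < t ^ 2).
Proof.
  intros Hz.
  assert (Hc : continuous (fun t => t ^ 2) z)
    by (apply (ex_derive_continuous (V := R_NormedModule)); auto_derive; auto).
  apply Hc, open_gt, Hz.
Qed.

Lemma vanishes_outside_d1 (r : R) (h : R * R -> R) :
  vanishes_outside r h -> vanishes_outside r (d1 h).
Proof.
  intros Hh [s t] Hst. unfold d1; cbn [fst snd] in *.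
  rewrite (Derive_ext_loc _ (fun _ => 0)); [apply Derive_const |].
  generalize (locally_sq_gt (r ^ 2 - t ^ 2) s ltac:(lra)). apply filter_imp.
  intros z Hz. apply Hh. cbn [fst snd]. lra.
Qed.

Lemma vanishes_outside_d2 (r : R) (h : R * R -> R) :
  vanishes_outside r h -> vanishes_outside r (d2 h).
Proof.
  intros Hh [s t] Hst. unfold d2; cbn [fst snd] in *.
  rewrite (Derive_ext_loc _ (fun _ => 0)); [apply Derive_const |].
  generalize (locally_sq_gt (r ^ 2 - s ^ 2) t ltac:(lra)). apply filter_imp.
  intros z Hz. apply Hh. cbn [fst snd]. lra.
Qed.

Lemma unit_vec_coord_bound (w : R * R) : unit_vec w -> Rabs (fst w) <= 1 /\ Rabs (snd w) <= 1.
Proof. unfold unit_vec. intros Hw. split; unfold Rabs; destruct Rcase_abs; nra. Qed.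

Definition exit_time (r : R) (p : R * R) : R := r + 2 * (Rabs (fst p) + Rabs (snd p)) + 1.

Lemma ray_leaves_disc (r : R) (p w : R * R) (s : R) :
  unit_vec w -> 0 <= r -> exit_time r p <= s ->
  r ^ 2 < fst (ray p w s) ^ 2 + snd (ray p w s) ^ 2.
Proof.
  intros Hw Hr Hs. destruct (unit_vec_coord_bound w Hw) as [W1 W2].
  unfold exit_time, unit_vec, ray in *.
  destruct p as [p1 p2], w as [w1 w2]; cbn [fst snd] in *.
  set (A := Rabs p1 + Rabs p2) in Hs.
  assert (Hdot : - A <= p1 * w1 + p2 * w2).
  { assert (- Rabs p1 <= p1 * w1) by (revert W1; unfold Rabs; do 2 destruct Rcase_abs; nra).
    assert (- Rabs p2 <= p2 * w2) by (revert W2; unfold Rabs; do 2 destruct Rcase_abs; nra).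
    unfold A; lra. }
  assert (HA : 0 <= A) by (unfold A; generalize (Rabs_pos p1) (Rabs_pos p2); lra).
  assert (Hexp : (p1 + s * w1) ^ 2 + (p2 + s * w2) ^ 2
                 = p1 ^ 2 + p2 ^ 2 + 2 * s * (p1 * w1 + p2 * w2) + s ^ 2) by nra.
  assert (Hgrow : (r + 1) * (r + 1) <= s * (s - 2 * A))
    by (apply Rmult_le_compat; lra).
  assert (0 <= s) by lra.
  rewrite Hexp. nra.
Qed.

Lemma exit_time_ray (r : R) (p w : R * R) (t : R) :
  unit_vec w -> Rabs t <= 1 -> exit_time r (ray p w t) <= exit_time r p + 4.
Proof.
  intros Hw Ht. destruct (unit_vec_coord_bound w Hw) as [W1 W2].
  unfold exit_time, ray; simpl.
  assert (K : forall a c, Rabs c <= 1 -> Rabs (a + t * c) <= Rabs a + 1).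
  { intros a c Hc. eapply Rle_trans; [apply Rabs_triang |]. rewrite Rabs_mult.
    assert (Rabs t * Rabs c <= 1 * 1)
      by (apply Rmult_le_compat; auto using Rabs_pos).
    lra. }
  generalize (K (fst p) _ W1) (K (snd p) _ W2). lra.
Qed.

Lemma RInt_gen_shift_vanishing (phi : R -> R) (a M : R) :
  (forall s, continuous phi s) -> (forall s, M <= s -> phi s = 0) ->
  RInt_gen (fun s => phi (a + s)) (at_point 0) (Rbar_locally p_infty) = RInt phi a M.
Proof.
  intros Hc H0.
  assert (Hex : forall c d, ex_RInt phi c d)
    by (intros; apply (ex_RInt_continuous (V := R_CompleteNormedModule)); auto).
  assert (Hshift : forall y, RInt (fun s => phi (a + s)) 0 y = RInt phi a (a + y)).
  { intros y. transitivity (RInt phi (1 * 0 + a) (1 * y + a)).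
    - rewrite <- RInt_comp_lin by apply Hex.
      apply RInt_ext. intros z _. change (phi (a + z) = 1 * phi (1 * z + a)).
      rewrite Rmult_1_l. f_equal. ring.
    - f_equal; ring. }
  apply is_RInt_gen_unique.
  intros P HP.
  exists (fun x => x = 0) (fun b => Rmax 0 (M - a) < b).
  - reflexivity.
  - exists (Rmax 0 (M - a)). auto.
  - intros x y -> Hy.
    generalize (Rmax_l 0 (M - a)) (Rmax_r 0 (M - a)). intros Hy0 HyM.
    exists (RInt phi a M). split; [| now apply locally_singleton].
    replace (RInt phi a M) with (RInt (fun s => phi (a + s)) 0 y).
    + apply RInt_correct, (ex_RInt_continuous (V := R_CompleteNormedModule)). intros z _.
      apply (continuous_comp (fun s => a + s) phi); [| apply Hc].
      apply (ex_derive_continuous (V := R_NormedModule)). auto_derive. auto.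
    + rewrite Hshift, <- (RInt_Chasles phi a M (a + y)) by apply Hex.
      rewrite (RInt_ext phi (fun _ => 0) M (a + y)).
      * rewrite RInt_const. unfold scal, plus; simpl; unfold mult, plus; simpl. ring.
      * intros z Hz. apply H0. rewrite Rmin_left in Hz by lra. lra.
Qed.

Section RayTransformOfCompactSupport.

Variables (r : R) (h : R * R -> R).
Hypotheses (Hr : 0 <= r) (Hh_supp : vanishes_outside r h) (Hh_cont : forall q, continuous h q).

Lemma Xray_ray_RInt (w p : R * R) (a M : R) :
  unit_vec w -> exit_time r p <= M ->
  Xray w h (ray p w a) = RInt (fun s => h (ray p w s)) a M.
Proof.
  intros Hw HM. unfold Xray.
  rewrite <- (RInt_gen_shift_vanishing (fun s => h (ray p w s)) a M).
  - f_equal. apply functional_extensionality. intros t. f_equal.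
    unfold ray. simpl. f_equal; ring.
  - intros s. apply continuous_ray_comp, Hh_cont.
  - intros s Hs. apply Hh_supp, ray_leaves_disc; auto; lra.
Qed.

Lemma Xray_RInt (w p : R * R) (M : R) :
  unit_vec w -> exit_time r p <= M -> Xray w h p = RInt (fun s => h (ray p w s)) 0 M.
Proof. intros Hw HM. rewrite <- (Xray_ray_RInt w p 0 M Hw HM). now rewrite ray_0. Qed.

(* FTC: [t |-> X_w h (y + t w)] is [RInt] from [t] to a fixed point beyond the support. *)
Lemma is_derive_Xray_along (w y : R * R) :
  unit_vec w -> is_derive (fun t => Xray w h (ray y w t)) 0 (- h y).
Proof.
  intros Hw.
  apply (is_derive_ext (fun t => RInt (fun s => h (ray y w s)) t (exit_time r y))).
  { intros t. symmetry. apply Xray_ray_RInt; auto; lra. }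
  replace (- h y) with (opp (h (ray y w 0))) by now rewrite ray_0.
  apply (is_derive_RInt' (fun s => h (ray y w s)) _ 0 (exit_time r y)).
  - apply filter_forall. intros t. apply (RInt_correct (V := R_CompleteNormedModule)).
    apply (ex_RInt_continuous (V := R_CompleteNormedModule)).
    intros s _. apply continuous_ray_comp, Hh_cont.
  - apply continuous_ray_comp, Hh_cont.
Qed.

End RayTransformOfCompactSupport.

(* Differentiation under the integral sign, on a window of parameters [|t| < 1] over
   which the integration interval can be kept fixed. *)
Lemma is_derive_Xray_across (r : R) (h : R * R -> R) (u v y : R * R) :
  0 <= r -> vanishes_outside r h -> C1 h -> unit_vec u -> unit_vec v ->
  is_derive (fun t => Xray u h (ray y v t)) 0 (Xray u (Dgrad v h) y).
Proof.
  intros Hr Hsupp Hh Hu Hv.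
  assert (Hh' := Hh). destruct Hh' as (_ & _ & Hc & Hc1 & Hc2).
  assert (HcD : forall q, continuous (Dgrad v h) q)
    by (intros q; unfold Dgrad; apply continuous_lincomb; auto).
  assert (HsuppD : vanishes_outside r (Dgrad v h)).
  { apply vanishes_outside_lincomb; [apply vanishes_outside_d1 | apply vanishes_outside_d2]; auto. }
  set (M := exit_time r y + 4).
  set (F := fun t s => h (ray (ray y u s) v t)).
  assert (HF : forall s t, is_derive (fun t => F t s) t (Dgrad v h (ray (ray y u s) v t)))
    by (intros; apply is_derive_ray_comp, Hh).
  rewrite (Xray_RInt r (Dgrad v h) Hr HsuppD HcD u y M Hu) by (unfold M; lra).
  apply (is_derive_ext_loc (fun t => RInt (fun s => F t s) 0 M)).
  { exists (mkposreal 1 Rlt_0_1). intros t Ht.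
    change (Rabs (t - 0) < 1) in Ht. rewrite Rminus_0_r in Ht.
    rewrite (Xray_RInt r h Hr Hsupp Hc u (ray y v t) M Hu).
    - apply RInt_ext. intros s _. unfold F. now rewrite ray_ray_comm.
    - generalize (exit_time_ray r y v t Hv). unfold M. lra. }
  replace (RInt (fun s => Dgrad v h (ray y u s)) 0 M)
    with (RInt (fun s => Derive (fun t => F t s) 0) 0 M)
    by (apply RInt_ext; intros s _; rewrite <- (ray_0 (ray y u s) v);
        apply is_derive_unique, HF).
  apply is_derive_RInt_param.
  - apply filter_forall. intros z s _. eexists. apply HF.
  - intros s _.
    apply (continuity_2d_pt_ext (fun z s => Dgrad v h (ray (ray y u s) v z))).
    + intros z s'. symmetry. apply is_derive_unique, HF.
    + apply continuity_2d_pt_ray_ray, HcD.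
  - apply filter_forall. intros z.
    apply (ex_RInt_continuous (V := R_CompleteNormedModule)). intros s _.
    apply (continuous_ext (fun s => h (ray (ray y v z) u s))).
    + intros s'. unfold F. now rewrite ray_ray_comm.
    + apply continuous_ray_comp, Hc.
Qed.

Lemma dot_field_lincomb (f : R * R -> R * R) (w : R * R) :
  (fun y => dot (f y) w) = fun y => fst w * fst (f y) + snd w * snd (f y).
Proof. apply functional_extensionality. intros y. unfold dot. ring. Qed.

Section CurlFromVLineTransform.

Variables (r : R) (f : R * R -> R * R).
Hypotheses (Hr : 0 <= r)
  (Hf1 : C2 (fun y => fst (f y))) (Hf2 : C2 (fun y => snd (f y)))
  (Hs1 : vanishes_outside r (fun y => fst (f y))) (Hs2 : vanishes_outside r (fun y => snd (f y))).

Lemma C2_dot_field (w : R * R) : C2 (fun y => dot (f y) w).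
Proof. rewrite dot_field_lincomb. now apply C2_lincomb. Qed.

Lemma vanishes_outside_dot_field (w : R * R) : vanishes_outside r (fun y => dot (f y) w).
Proof. rewrite dot_field_lincomb. now apply vanishes_outside_lincomb. Qed.

Lemma Ddir_Lvl (u v : R * R) : unit_vec u -> unit_vec v ->
  Ddir v (Lvl u v f) = fun y => - Xray u (Dgrad v (fun z => dot (f z) u)) y - dot (f y) v.
Proof.
  intros Hu Hv. apply functional_extensionality. intros y.
  destruct (C2_C1 _ (C2_dot_field v)) as (_ & _ & Hcv & _).
  unfold Ddir, Lvl. apply is_derive_unique.
  apply (is_derive_plus (fun t => - Xray u _ (ray y v t)) (fun t => Xray v _ (ray y v t))).
  - apply (is_derive_opp (fun t => Xray u _ (ray y v t))).
    exact (is_derive_Xray_across r _ u v y Hr (vanishes_outside_dot_field u)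
             (C2_C1 _ (C2_dot_field u)) Hu Hv).
  - exact (is_derive_Xray_along r _ Hr (vanishes_outside_dot_field v) Hcv v y Hv).
Qed.

Lemma Ddir_Ddir_Lvl (u v x : R * R) : unit_vec u -> unit_vec v ->
  Ddir u (Ddir v (Lvl u v f)) x
  = Dgrad v (fun z => dot (f z) u) x - Dgrad u (fun z => dot (f z) v) x.
Proof.
  intros Hu Hv. rewrite (Ddir_Lvl u v Hu Hv).
  destruct (C2_C1 _ (C2_dot_field u)) as (_ & _ & _ & Hc1 & Hc2).
  unfold Ddir. apply is_derive_unique.
  replace (Dgrad v _ x - Dgrad u _ x)
    with (- - Dgrad v (fun z => dot (f z) u) x
          + - Dgrad u (fun z => dot (f z) v) (ray x u 0)) by (rewrite ray_0; ring).
  apply (is_derive_plus (fun t => - Xray u _ (ray x u t)) (fun t => - dot (f (ray x u t)) v)).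
  - apply (is_derive_opp (fun t => Xray u _ (ray x u t))).
    apply (is_derive_Xray_along r); [exact Hr | | | exact Hu].
    + apply vanishes_outside_lincomb;
        [apply vanishes_outside_d1 | apply vanishes_outside_d2]; apply vanishes_outside_dot_field.
    + intros q. apply continuous_lincomb; [apply Hc1 | apply Hc2].
  - apply (is_derive_opp (fun t => dot (f (ray x u t)) v)).
    apply (is_derive_ray_comp (fun z => dot (f z) v)), C2_C1, C2_dot_field.
Qed.

Lemma Dgrad_dot_field_curl (u v x : R * R) :
  Dgrad v (fun z => dot (f z) u) x - Dgrad u (fun z => dot (f z) v) x = detvu v u * curl f x.
Proof.
  destruct Hf1 as (a1 & a2 & _). destruct Hf2 as (b1 & b2 & _).
  unfold Dgrad, curl, detvu. rewrite !dot_field_lincomb.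
  rewrite !(d1_lincomb _ _ _ _ a1 b1), !(d2_lincomb _ _ _ _ a2 b2).
  ring.
Qed.

Lemma curl_Lvl (u v x : R * R) : unit_vec u -> unit_vec v -> detvu v u <> 0 ->
  curl f x = / detvu v u * Ddir u (Ddir v (Lvl u v f)) x.
Proof.
  intros Hu Hv Hdet.
  rewrite (Ddir_Ddir_Lvl u v x Hu Hv), Dgrad_dot_field_curl.
  field. exact Hdet.
Qed.

End CurlFromVLineTransform.

Lemma derive_nonneg_zero_between (F F' : R -> R) (a b x : R) :
  (forall z, is_derive F z (F' z)) -> (forall z, 0 <= F' z) -> F a = 0 -> F b = 0 ->
  a < x < b -> F' x = 0.
Proof.
  intros HD Hpos Ha Hb Hx.
  assert (Hmono : forall y z, y < z -> F y <= F z).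
  { intros y z Hyz.
    destruct (MVT_gen F y z F') as (c & _ & Hc).
    - intros; apply HD.
    - intros. apply continuity_pt_filterlim, (ex_derive_continuous (V := R_NormedModule)).
      eexists; apply HD.
    - generalize (Hpos c). nra. }
  rewrite <- (is_derive_unique _ _ _ (HD x)).
  rewrite (Derive_ext_loc F (fun _ => 0)); [apply Derive_const |].
  apply (filter_imp (fun t => a < t < b)).
  - intros t Ht. generalize (Hmono a t) (Hmono t b). lra.
  - apply (open_and _ _ (open_gt a) (open_lt b)). exact Hx.
Qed.

Lemma RInt_nonneg_zero (g : R -> R) (a b x : R) :
  (forall t, continuous g t) -> (forall t, 0 <= g t) -> RInt g a b = 0 ->
  a < x < b -> g x = 0.
Proof.
  intros Hc Hpos H0 Hx.
  apply (derive_nonneg_zero_between (RInt g a) g a b); auto.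
  - intros z. apply (is_derive_RInt g (RInt g a) a z); [| apply Hc].
    apply filter_forall. intros y. apply (RInt_correct (V := R_CompleteNormedModule)).
    apply (ex_RInt_continuous (V := R_CompleteNormedModule)). auto.
  - apply (RInt_point (V := R_CompleteNormedModule)).
Qed.

Section HarmonicWithCompactSupport.

Variables (r : R) (a : R * R -> R).
Hypotheses (Hr : 0 < r) (Ha : C2 a) (Hsupp : vanishes_outside r a)
  (Hharm : forall q, d1 (d1 a) q = - d2 (d2 a) q).

Let M := r + 1.
Let density (s t : R) := d1 a (s, t) ^ 2 + d2 a (s, t) ^ 2.
Let energy (s : R) := RInt (density s) (- M) M.
Let flux (s : R) := RInt (fun t => a (s, t) * d1 a (s, t)) (- M) M.

Lemma vanishes_off_square (s t : R) : M <= Rabs s \/ M <= Rabs t -> a (s, t) = 0.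
Proof.
  intros Hst. apply Hsupp. cbn [fst snd].
  rewrite <- (pow2_abs s), <- (pow2_abs t).
  generalize (Rabs_pos s) (Rabs_pos t). unfold M in Hst. nra.
Qed.

Lemma continuous_density (s t : R) : continuous (density s) t.
Proof.
  destruct Ha as (_ & _ & _ & _ & _ & _ & _ & c1 & c2 & _).
  assert (Hsq : forall x, continuous (fun x => x ^ 2) x)
    by (intros; apply (ex_derive_continuous (V := R_NormedModule)); auto_derive; auto).
  apply (continuous_plus (V := R_NormedModule) (fun t => d1 a (s, t) ^ 2) (fun t => d2 a (s, t) ^ 2));
    apply (continuous_comp _ (fun x => x ^ 2)); auto using continuous_slice_r.
Qed.

(* With [a_ss = - a_tt], integration by parts in [t] (whose boundary terms vanish) turns
   [a a_ss] into [a_t ^ 2]. *)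
Lemma is_RInt_flux_derivative (s : R) :
  is_RInt (fun t => d1 a (s, t) * d1 a (s, t) + a (s, t) * d1 (d1 a) (s, t)) (- M) M (energy s).
Proof.
  destruct Ha as (_ & h2 & _ & _ & _ & h22 & c & _ & c2 & _ & _ & _ & c22).
  apply (is_RInt_ext (fun t => minus (density s t)
                                     (plus (scal (d2 a (s, t)) (d2 a (s, t)))
                                           (scal (a (s, t)) (d2 (d2 a) (s, t)))))).
  { intros t _. rewrite Hharm. unfold density, minus, plus, opp, scal; simpl; unfold mult; simpl.
    ring. }
  replace (energy s) with (minus (energy s) (minus (scal (a (s, M)) (d2 a (s, M)))
                                                   (scal (a (s, - M)) (d2 a (s, - M))))).
  2: { rewrite !vanishes_off_square
         by (right; rewrite ?Rabs_Ropp, Rabs_pos_eq; unfold M; lra).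
       unfold minus, plus, opp, scal; simpl; unfold mult; simpl. ring. }
  apply (is_RInt_minus (V := R_NormedModule)).
  - apply (RInt_correct (V := R_CompleteNormedModule)).
    apply (ex_RInt_continuous (V := R_CompleteNormedModule)). intros; apply continuous_density.
  - apply (is_RInt_scal_derive (V := R_CompleteNormedModule)); intros t _.
    + apply Derive_correct, (h2 (s, t)).
    + apply Derive_correct, (h22 (s, t)).
    + apply continuous_slice_r, c2.
    + apply continuous_slice_r, c22.
Qed.

Lemma is_derive_flux (s : R) : is_derive flux s (energy s).
Proof.
  destruct Ha as (h1 & _ & h11 & _ & _ & _ & c & c1 & _ & c11 & _).
  assert (Hprod : forall z t, is_derive (fun z => a (z, t) * d1 a (z, t)) z
                                (d1 a (z, t) * d1 a (z, t) + a (z, t) * d1 (d1 a) (z, t))).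
  { intros z t. apply (is_derive_mult (fun z => a (z, t)) (fun z => d1 a (z, t)));
      [apply Derive_correct, (h1 (z, t)) | apply Derive_correct, (h11 (z, t)) | apply Rmult_comm]. }
  rewrite <- (is_RInt_unique _ _ _ _ (is_RInt_flux_derivative s)).
  replace (RInt _ (- M) M)
    with (RInt (fun t => Derive (fun z => a (z, t) * d1 a (z, t)) s) (- M) M)
    by (apply RInt_ext; intros t _; apply is_derive_unique, Hprod).
  apply (is_derive_RInt_param (fun z t => a (z, t) * d1 a (z, t))).
  - apply filter_forall. intros z t _. eexists. apply Hprod.
  - intros t _.
    apply (continuity_2d_pt_ext
             (fun z t => d1 a (z, t) * d1 a (z, t) + a (z, t) * d1 (d1 a) (z, t))).
    + intros z t'. symmetry. apply is_derive_unique, Hprod.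
    + apply continuity_2d_pt_plus; apply continuity_2d_pt_mult;
        apply continuity_2d_pt_uncurry; auto.
  - apply filter_forall. intros z.
    apply (ex_RInt_continuous (V := R_CompleteNormedModule)). intros t _.
    apply (continuous_mult (K := R_AbsRing) (fun t => a (z, t)) (fun t => d1 a (z, t)));
      apply continuous_slice_r; auto.
Qed.

Lemma flux_off_square (s : R) : M <= Rabs s -> flux s = 0.
Proof.
  intros Hs. unfold flux.
  rewrite (RInt_ext _ (fun _ => 0)).
  - rewrite RInt_const. apply (scal_zero_r (K := R_AbsRing) (V := R_NormedModule)).
  - intros t _. rewrite vanishes_off_square by (left; exact Hs). apply Rmult_0_l.
Qed.

Lemma energy_vanishes (s : R) : - M < s < M -> energy s = 0.
Proof.
  intros Hs.
  assert (HM : 0 < M) by (unfold M; lra).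
  apply (derive_nonneg_zero_between flux energy (- M) M s); auto using is_derive_flux.
  - intros z. apply RInt_ge_0; [lra | |].
    + apply (ex_RInt_continuous (V := R_CompleteNormedModule)). intros; apply continuous_density.
    + intros t _. unfold density. nra.
  - apply flux_off_square. rewrite Rabs_Ropp, Rabs_pos_eq; lra.
  - apply flux_off_square. rewrite Rabs_pos_eq; lra.
Qed.

Lemma d1_vanishes (q : R * R) : d1 a q = 0.
Proof.
  destruct q as [s t].
  destruct (Rlt_or_le (r ^ 2) (s ^ 2 + t ^ 2)) as [Hout | Hin].
  - apply (vanishes_outside_d1 r a Hsupp). exact Hout.
  - assert (Hs : - M < s < M) by (unfold M; split; nra).
    assert (Ht : - M < t < M) by (unfold M; split; nra).
    assert (Hd : density s t = 0).
    { apply (RInt_nonneg_zero (density s) (- M) M); auto using continuous_density.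
      - intros t'. unfold density. nra.
      - apply energy_vanishes, Hs. }
    unfold density in Hd. nra.
Qed.

Lemma harmonic_vanishes (q : R * R) : a q = 0.
Proof.
  destruct Ha as (h1 & _).
  destruct q as [s t].
  assert (HM : 0 < M) by (unfold M; lra).
  destruct (Rlt_or_le s M) as [Hs | Hs].
  - rewrite (eq_is_derive (fun z => a (z, t)) s M).
    + apply vanishes_off_square. left. rewrite Rabs_pos_eq; lra.
    + intros z _. generalize (Derive_correct _ _ (h1 (z, t))).
      change (Derive _ _) with (d1 a (z, t)). rewrite d1_vanishes. easy.
    + exact Hs.
  - apply vanishes_off_square. left. rewrite Rabs_pos_eq; lra.
Qed.

End HarmonicWithCompactSupport.

Lemma div_curl_free_vanishes (r : R) (p q : R * R -> R) :
  0 < r -> C2 p -> C2 q -> vanishes_outside r p -> vanishes_outside r q ->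
  (forall x, d1 p x + d2 q x = 0) -> (forall x, d1 q x - d2 p x = 0) ->
  forall x, p x = 0 /\ q x = 0.
Proof.
  intros Hr Hp Hq Sp Sq Hdiv Hcurl x.
  assert (E1 : d1 p = fun y => - d2 q y)
    by (apply functional_extensionality; intros y; generalize (Hdiv y); lra).
  assert (E2 : d1 q = d2 p)
    by (apply functional_extensionality; intros y; generalize (Hcurl y); lra).
  split.
  - apply (harmonic_vanishes r p); auto.
    intros y. rewrite E1, d1_opp, d1_d2_comm, E2 by exact Hq. reflexivity.
  - apply (harmonic_vanishes r q); auto.
    intros y. rewrite E2, d1_d2_comm, E1, d2_opp by exact Hp. reflexivity.
Qed.

Lemma Lvl_injective_div_free (Rad : R) (u v : R * R) (f g : R * R -> R * R) :
  unit_vec u -> unit_vec v -> detvu v u <> 0 ->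
  field_C2c_disc Rad f -> field_C2c_disc Rad g ->
  (forall x, div f x = 0) -> (forall x, div g x = 0) ->
  (forall x, Lvl u v f x = Lvl u v g x) -> forall x, f x = g x.
Proof.
  intros Hu Hv Hdet [[Cf1 Sf1] [Cf2 Sf2]] [[Cg1 Sg1] [Cg2 Sg2]] Df Dg HL x.
  assert (HRad : 0 < Rad) by (destruct Sf1 as (r & Hr & _); lra).
  apply supp_in_disc_vanishes_outside in Sf1, Sf2, Sg1, Sg2.
  assert (Hcurl : forall y, curl f y = curl g y).
  { intros y.
    rewrite (curl_Lvl Rad f (Rlt_le _ _ HRad) Cf1 Cf2 Sf1 Sf2 u v y Hu Hv Hdet),
            (curl_Lvl Rad g (Rlt_le _ _ HRad) Cg1 Cg2 Sg1 Sg2 u v y Hu Hv Hdet).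
    replace (Lvl u v g) with (Lvl u v f) by (apply functional_extensionality; exact HL).
    reflexivity. }
  pose proof Cf1 as (f11 & f12 & _). pose proof Cf2 as (f21 & f22 & _).
  pose proof Cg1 as (g11 & g12 & _). pose proof Cg2 as (g21 & g22 & _).
  destruct (div_curl_free_vanishes Rad (fun y => 1 * fst (f y) + -1 * fst (g y))
              (fun y => 1 * snd (f y) + -1 * snd (g y))) with (x := x) as [Hp Hq];
    auto using C2_lincomb, vanishes_outside_lincomb.
  - intros y. rewrite (d1_lincomb _ _ _ _ f11 g11), (d2_lincomb _ _ _ _ f22 g22).
    generalize (Df y) (Dg y). unfold div. lra.
  - intros y. rewrite (d1_lincomb _ _ _ _ f21 g21), (d2_lincomb _ _ _ _ f12 g12).
    generalize (Hcurl y). unfold curl. lra.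
  - rewrite (surjective_pairing (f x)), (surjective_pairing (g x)). f_equal; lra.
Qed.

Theorem theorem3 (u v : R * R) (Rad : R) :
  unit_vec u -> unit_vec v -> detvu v u <> 0 -> 0 < Rad ->
  (forall f : R * R -> R * R, field_C2c_disc Rad f ->
     forall x : R * R,
       curl f x = / detvu v u * Ddir u (Ddir v (Lvl u v f)) x)
  /\
  (forall f g : R * R -> R * R,
     field_C2c_disc Rad f -> field_C2c_disc Rad g ->
     (forall x, div f x = 0) -> (forall x, div g x = 0) ->
     (forall x, Lvl u v f x = Lvl u v g x) ->
     forall x, f x = g x).
Proof.
  intros Hu Hv Hdet HRad. split.
  - intros f [[Cf1 Sf1] [Cf2 Sf2]] x.
    apply (curl_Lvl Rad); auto using Rlt_le, supp_in_disc_vanishes_outside.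
  - intros f g. apply Lvl_injective_div_free; assumption.
Qed.
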